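(* Let $A\in\mathbb{R}^{m\times n}$ with $\operatorname{rank}(A)=m$, $b\in\mathbb{R}^m$, and suppose $\mathcal{F}=\{x\in\mathbb{R}^n: Ax=b,\ x\ge 0\}$ is nonempty with no strictly positive point. Let $y\in\mathbb{R}^m$ satisfy $0\ne z:=A^Ty\ge 0$ and $\langle b,y\rangle=0$, and let $V\in\mathbb{R}^{n\times(n-s_z)}$ be the matrix whose columns are the unit vectors $e_i$ for the indices $i$ with $z_i=0$ (in increasing order), where $s_z=|\{i:z_i>0\}|$. Let $\mathcal{I}_0=\{i\in\{1,\dots,n\}: x_i=0 \text{ for all } x\in\mathcal{F}\}$. Then for every basic feasible solution $\bar x$ of $\mathcal{F}$ with basis $\mathcal{B}$: (1) the degree of degeneracy of $\bar x$ is at least $m-\operatorname{rank}(AV)$; (2) at least $m-\operatorname{rank}(AV)$ of the basic indices in $\mathcal{B}$ belong to $\mathcal{I}_0$.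
   Context: Given $\mathcal{B}\subset\{1,\dots,n\}$ with $|\mathcal{B}|=m$, a point $x\in\mathcal{F}$ is a basic feasible solution (with basis $\mathcal{B}$) if $A(:,\mathcal{B})$ (columns of $A$ indexed by $\mathcal{B}$) is nonsingular and $x_i=0$ for all $i\notin\mathcal{B}$. The degree of degeneracy of a basic feasible solution $\bar x$ with basis $\mathcal{B}$ is the number of indices $i\in\mathcal{B}$ with $\bar x_i=0$. Such a $y$ exists whenever strict feasibility fails, and $\mathcal{F}=\{Vv: AVv=b,\ v\ge 0\}$. *)

From HB Require Import structures.
From mathcomp Require Import all_boot all_order all_algebra.
Set Implicit Arguments. Unset Strict Implicit. Unset Printing Implicit Defensive.
Import Order.TTheory GRing.Theory Num.Theory.
Local Open Scope ring_scope.

(* Vectors in R^k are column vectors 'cV[R]_k; indices are 'I_n = {0,...,n-1}. *)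

Definition feasible (R : realFieldType) m n (A : 'M[R]_(m, n)) (b : 'cV[R]_m)
  (x : 'cV[R]_n) : Prop :=
  A *m x = b /\ forall i, 0 <= x i 0.

(* A(:, B): the columns of A indexed by B (in increasing order). *)
Definition colsB (R : realFieldType) m n (A : 'M[R]_(m, n)) (B : {set 'I_n}) :
  'M[R]_(m, #|B|) := colsub (fun j : 'I_#|B| => enum_val j) A.

Definition basic_feasible (R : realFieldType) m n (A : 'M[R]_(m, n))
  (b : 'cV[R]_m) (x : 'cV[R]_n) (B : {set 'I_n}) : Prop :=
  [/\ feasible A b x, #|B| = m, \rank (colsB A B) = m
    & forall i, i \notin B -> x i 0 = 0].

Definition degeneracy n (R : realFieldType) (x : 'cV[R]_n) (B : {set 'I_n}) : nat :=
  #|[set i in B | x i 0 == 0]|.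

Definition zeroset (R : realFieldType) n (z : 'cV[R]_n) : {set 'I_n} :=
  [set i | z i 0 == 0].

Definition Vmat (R : realFieldType) n (z : 'cV[R]_n) :
  'M[R]_(n, #|zeroset z|) :=
  \matrix_(i < n, j < #|zeroset z|) (i == enum_val j)%:R.

Definition in_I0 (R : realFieldType) m n (A : 'M[R]_(m, n)) (b : 'cV[R]_m)
  (i : 'I_n) : Prop :=
  forall x, feasible A b x -> x i 0 = 0.

From HB Require Import structures.
From mathcomp Require Import all_boot all_order all_algebra.
Set Implicit Arguments. Unset Strict Implicit. Unset Printing Implicit Defensive.
Import Order.TTheory GRing.Theory Num.Theory.
Local Open Scope ring_scope.

(* If z = A^T y >= 0 and <b, y> = 0, then <z, x> = <y, A x> = <y, b> = 0 for
   every feasible x, so x vanishes on the support of z: the support of z lies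
   in I_0. Since A V is the submatrix of A formed by the columns outside that
   support, the m independent columns of A(:, B) consist of at most rank(A V)
   independent ones outside the support and the remaining ones, at least
   m - rank(A V), inside it; these basic indices lie in I_0, so the basic
   solution vanishes there. *)

Section Columns.

Variables (R : realFieldType) (m n : nat) (A : 'M[R]_(m, n)).

Lemma row_tr_colsB (B : {set 'I_n}) (j : 'I_#|B|) :
  row j (colsB A B)^T = (col (enum_val j) A)^T.
Proof. by apply/rowP => k; rewrite !mxE. Qed.

Lemma col_tr_sub_colsB (D : {set 'I_n}) i :
  i \in D -> ((col i A)^T <= (colsB A D)^T)%MS.
Proof.
move=> iD; rewrite -(enum_rankK_in iD iD) -row_tr_colsB; exact: row_sub.
Qed.

Lemma rank_colsB_le (B Z : {set 'I_n}) :
  (\rank (colsB A B) <= \rank (colsB A Z) + #|B :\: Z|)%N.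
Proof.
have sub_sum : ((colsB A B)^T <= (colsB A Z)^T + (colsB A (B :\: Z))^T)%MS.
  apply/row_subP => j; rewrite row_tr_colsB.
  have jB := enum_valP j.
  have [jZ | jNZ] := boolP (enum_val j \in Z).
    exact: submx_trans (col_tr_sub_colsB jZ) (addsmxSl _ _).
  apply: submx_trans (col_tr_sub_colsB _) (addsmxSr _ _).
  by rewrite inE jNZ.
rewrite -mxrank_tr; apply: leq_trans (mxrankS sub_sum) _.
apply: leq_trans (mxrank_adds_leqif _ _) _.
by rewrite !mxrank_tr leq_add2l rank_leq_col.
Qed.

End Columns.

Lemma mul_Vmat (R : realFieldType) m n (A : 'M[R]_(m, n)) (z : 'cV[R]_n) :
  A *m Vmat z = colsB A (zeroset z).
Proof.
apply/matrixP => i j; rewrite !mxE (bigD1 (enum_val j)) //= big1 ?addr0.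
  by rewrite mxE eqxx mulr1.
by move=> k /negPf kj; rewrite mxE kj mulr0.
Qed.

Lemma nneg_orthogonal_vanish (R : realFieldType) n (z x : 'cV[R]_n) i :
  (forall j, 0 <= z j 0) -> (forall j, 0 <= x j 0) -> (z^T *m x) 0 0 = 0 ->
  z i 0 != 0 -> x i 0 = 0.
Proof.
move=> z_ge0 x_ge0 zx0 zi_neq0.
have zx_ge0 j : xpredT j -> 0 <= z j 0 * x j 0 by rewrite mulr_ge0.
rewrite mxE (eq_bigr (fun j => z j 0 * x j 0)) in zx0; last first.
  by move=> j _; rewrite mxE.
have /eqP := psumr_eq0P zx_ge0 zx0 (i := i) isT.
by rewrite mulf_eq0 (negPf zi_neq0) => /eqP.
Qed.

Lemma support_in_I0 (R : realFieldType) m n (A : 'M[R]_(m, n))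
  (b y : 'cV[R]_m) (i : 'I_n) :
  (forall j, 0 <= (A^T *m y) j 0) -> \sum_(k < m) b k 0 * y k 0 = 0 ->
  (A^T *m y) i 0 != 0 -> in_I0 A b i.
Proof.
move=> z_ge0 by0 zi_neq0 x [Ax_b x_ge0].
apply: nneg_orthogonal_vanish z_ge0 x_ge0 _ zi_neq0.
rewrite trmx_mul trmxK -mulmxA Ax_b mxE -[RHS]by0.
by apply: eq_bigr => k _; rewrite mxE mulrC.
Qed.

Lemma card_I0_le_degeneracy (R : realFieldType) m n (A : 'M[R]_(m, n))
  (b : 'cV[R]_m) (x : 'cV[R]_n) (B S : {set 'I_n}) :
  feasible A b x -> S \subset B -> (forall i, i \in S -> in_I0 A b i) ->
  (#|S| <= degeneracy x B)%N.
Proof.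
move=> x_feas /subsetP SB S_I0; apply/subset_leq_card/subsetP => i iS.
by rewrite inE SB // (S_I0 i iS x x_feas) eqxx.
Qed.

Theorem mainTheorem7 (R : realFieldType) (m n : nat)
  (A : 'M[R]_(m, n)) (b : 'cV[R]_m) (y : 'cV[R]_m)
  (hrank : \rank A = m)
  (hne : exists x, feasible A b x)
  (hnostrict : ~ exists x, feasible A b x /\ forall i, 0 < x i 0)
  (hz0 : A^T *m y != 0)
  (hzge : forall i, 0 <= (A^T *m y) i 0)
  (hby : \sum_(i < m) b i 0 * y i 0 = 0) :
  forall (xbar : 'cV[R]_n) (B : {set 'I_n}), basic_feasible A b xbar B ->
    ((m - \rank (A *m Vmat (A^T *m y)))%N <= degeneracy xbar B)%N /\
    exists S : {set 'I_n}, [/\ S \subset B,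
      ((m - \rank (A *m Vmat (A^T *m y)))%N <= #|S|)%N
      & forall i, i \in S -> in_I0 A b i].
Proof.
move=> xbar B [xbar_feas _ rankB _].
set S := B :\: zeroset (A^T *m y).
have SB : S \subset B by apply: subsetDl.
have S_I0 i : i \in S -> in_I0 A b i.
  by rewrite !inE => /andP[zi _]; exact: support_in_I0.
have S_card : ((m - \rank (A *m Vmat (A^T *m y)))%N <= #|S|)%N.
  by rewrite leq_subLR mul_Vmat -{1}rankB rank_colsB_le.
split; last by exists S.
exact: leq_trans S_card (card_I0_le_degeneracy xbar_feas SB S_I0).
Qed.
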